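(* Let $K$ be a field of characteristic $0$, let $S=K[x_1,\ldots,x_n]$ be graded by $\deg x_i=a_i>0$, and let $I\subset S$ be a homogeneous ideal. Suppose that $(I^{(k-1)})^2\subseteq I^k$ for some $k\ge2$. Then every homogeneous ideal $J$ with $I^k\subseteq J\subseteq I^{(k)}$ is strongly Golod, i.e. $\partial(J)^2\subseteq J$, where $\partial(J)$ is the ideal generated by all $\partial f/\partial x_i$ with $f\in J$, $1\le i\le n$. In particular, any homogeneous ideal $J$ with $I^2\subseteq J\subseteq I^{(2)}$ is strongly Golod.
   Context: The $m$-th symbolic power is $I^{(m)}=\bigcup_{t\ge1} I^m:L^t$, where $L$ is the intersection of all associated, non-minimal prime ideals of $I^m$. *)

From mathcomp Require Import all_boot all_algebra.
From mathcomp Require Import mpoly.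
Set Implicit Arguments. Unset Strict Implicit. Unset Printing Implicit Defensive.
Import GRing.Theory.
Local Open Scope ring_scope.

Section IdealDefs.
Variable R : comNzRingType.

Definition is_ideal (I : R -> Prop) : Prop :=
  [/\ I 0, (forall a b, I a -> I b -> I (a + b)) & (forall r a, I a -> I (r * a))].

Definition subid (I J : R -> Prop) : Prop := forall f, I f -> J f.

Definition gen (A : R -> Prop) : R -> Prop :=
  fun f => forall J, is_ideal J -> subid A J -> J f.

Definition idmul (I J : R -> Prop) : R -> Prop :=
  gen (fun h => exists a b, [/\ I a, J b & h = a * b]).

Fixpoint idpow (I : R -> Prop) (m : nat) : R -> Prop :=
  match m with
  | O => fun _ => True
  | S m' => idmul I (idpow I m')
  end.

Definition colon (I J : R -> Prop) : R -> Prop :=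
  fun f => forall g, J g -> I (f * g).

Definition is_prime (P : R -> Prop) : Prop :=
  [/\ is_ideal P, ~ P 1 & forall a b, P (a * b) -> P a \/ P b].

Definition associated_prime (I P : R -> Prop) : Prop :=
  is_prime P /\ exists f, forall g, P g <-> I (f * g).

Definition minimal_prime (I P : R -> Prop) : Prop :=
  [/\ is_prime P, subid I P &
      forall Q, is_prime Q -> subid I Q -> subid Q P -> subid P Q].

Definition embedded_int (I : R -> Prop) (m : nat) : R -> Prop :=
  fun f => forall P, associated_prime (idpow I m) P ->
                     ~ minimal_prime (idpow I m) P -> P f.

Definition symbolic_power (I : R -> Prop) (m : nat) : R -> Prop :=
  fun f => exists2 t : nat, (1 <= t)%N &
           colon (idpow I m) (idpow (embedded_int I m) t) f.

End IdealDefs.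

Section Graded.
Variables (K : fieldType) (n : nat) (a : 'I_n -> nat).

Definition wdeg (m : 'X_{1..n}) : nat := (\sum_(i < n) a i * m i)%N.

Definition whomog (p : {mpoly K[n]}) : Prop :=
  forall m1 m2, m1 \in msupp p -> m2 \in msupp p -> wdeg m1 = wdeg m2.

Definition homog_ideal (I : {mpoly K[n]} -> Prop) : Prop :=
  is_ideal I /\ subid I (gen (fun g => I g /\ whomog g)).

End Graded.

Definition deriv_ideal (K : fieldType) (n : nat) (J : {mpoly K[n]} -> Prop)
  : {mpoly K[n]} -> Prop :=
  gen (fun h => exists f i, J f /\ h = mderiv i f).

Definition strongly_golod (K : fieldType) (n : nat) (J : {mpoly K[n]} -> Prop)
  : Prop := subid (idpow (deriv_ideal J) 2) J.

From mathcomp Require Import all_boot all_order all_algebra.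
From mathcomp Require Import mpoly.
From mathcomp Require Import ring.
From Stdlib Require Import ClassicalEpsilon.
From Stdlib Require List.
Set Implicit Arguments. Unset Strict Implicit. Unset Printing Implicit Defensive.
Import Order.TTheory GRing.Theory.
Local Open Scope ring_scope.

(* Write I^(m) for the m-th symbolic power and d for a partial derivative.  If s f lies
   in I^k with s outside a minimal prime P of I^k, then s^2 (df) = s d(s f) - (s f) ds lies
   in I^(k-1), because d maps I^k into I^(k-1).  So d maps I^(k) into I^(k-1) as soon as
   symbolic powers are described through minimal primes only: f is in I^(m) iff for every
   minimal prime P of I^m some s outside P has s f in I^m.  This description follows from
   an irredundant primary decomposition of I^m, which exists since K[x_1, ..., x_n] is
   Noetherian.  Then d(J)^2 is contained in (I^(k-1))^2, hence in I^k and in J.  Neither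
   the grading nor the characteristic plays a role. *)

Section IdealArithmetic.
Variable R : comNzRingType.
Implicit Types (A X Y Z : R -> Prop) (x y : R).

Lemma gen_least A X : is_ideal X -> subid A X -> subid (gen A) X.
Proof. by move=> hX hA f; apply. Qed.

Lemma sub_gen A : subid A (gen A).
Proof. by move=> f Af J _; apply. Qed.

Lemma gen_ideal A : is_ideal (gen A).
Proof.
split; first by move=> J [].
- move=> x y hx hy J hJ hAJ; case: (hJ) => _ hD _.
  by apply: hD; [apply: hx|apply: hy].
- by move=> r x hx J hJ hAJ; case: (hJ) => _ _ hM; apply: hM; apply: hx.
Qed.

Lemma ideal0 X : is_ideal X -> X 0. Proof. by case. Qed.
Lemma idealD X x y : is_ideal X -> X x -> X y -> X (x + y).
Proof. by case=> _ h _; apply: h. Qed.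
Lemma idealMl X r x : is_ideal X -> X x -> X (r * x). Proof. by case=> _ _ h; apply: h. Qed.
Lemma idealMr X r x : is_ideal X -> X x -> X (x * r).
Proof. by rewrite mulrC; apply: idealMl. Qed.
Lemma idealB X x y : is_ideal X -> X x -> X y -> X (x - y).
Proof. by move=> hX hx hy; rewrite -mulN1r; apply: idealD => //; apply: idealMl. Qed.
Lemma ideal_sum X (I : Type) (s : seq I) (P : pred I) (F : I -> R) :
  is_ideal X -> (forall i, P i -> X (F i)) -> X (\sum_(i <- s | P i) F i).
Proof. by move=> hX; apply: (big_ind X (ideal0 hX) (fun x y => @idealD X x y hX)). Qed.
Lemma ideal_full X x : is_ideal X -> X 1 -> X x.
Proof. by move=> hX h1; rewrite -(mulr1 x); apply: idealMl. Qed.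

Lemma ideal_mulr_preim X w : is_ideal X -> is_ideal (fun u => X (u * w)).
Proof.
move=> hX; split; first by rewrite mul0r; apply: ideal0.
- by move=> x y hx hy; rewrite mulrDl; apply: idealD.
- by move=> r x hx; rewrite -mulrA; apply: idealMl.
Qed.

Lemma ideal_mull_preim X w : is_ideal X -> is_ideal (fun u => X (w * u)).
Proof.
move=> hX; split; first by rewrite mulr0; apply: ideal0.
- by move=> x y hx hy; rewrite mulrDr; apply: idealD.
- by move=> r x hx; rewrite mulrCA; apply: idealMl.
Qed.

Lemma idmul_ideal X Y : is_ideal (idmul X Y). Proof. exact: gen_ideal. Qed.

Lemma idpow_ideal X m : is_ideal (idpow X m).
Proof. by case: m => [|m] //=; exact: idmul_ideal. Qed.

Lemma idmul_mul X Y x y : X x -> Y y -> idmul X Y (x * y).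
Proof. by move=> hx hy; apply: sub_gen; exists x, y. Qed.

Lemma idmul_least X Y Z : is_ideal Z -> (forall x y, X x -> Y y -> Z (x * y)) ->
  subid (idmul X Y) Z.
Proof. by move=> hZ h; apply: gen_least => // f [x [y [hx hy ->]]]; apply: h. Qed.

Lemma idpowSr X m : subid (idpow X m.+1) (idpow X m).
Proof. by apply: idmul_least => [|x y _ hy]; [|apply: idealMl hy]; apply: idpow_ideal. Qed.

Lemma idpow_leq X m m' : (m <= m')%N -> subid (idpow X m') (idpow X m).
Proof.
apply: (homo_leq (f := idpow X) (r := fun Y Z => subid Z Y)) => [Y f //||i].
  by move=> Y Z Z' h1 h2 f /h2 /h1.
exact: idpowSr.
Qed.

Lemma idpow_subid X Y m : subid X Y -> subid (idpow X m) (idpow Y m).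
Proof.
move=> hXY; elim: m => [|m IH] //=.
apply: idmul_least; first exact: idmul_ideal.
by move=> x y hx hy; apply: idmul_mul; [apply: hXY|apply: IH].
Qed.

Lemma idpow_sub X m : is_ideal X -> (1 <= m)%N -> subid (idpow X m) X.
Proof.
move=> hX hm f /(idpow_leq hm).
by apply: idmul_least => // x y hx _; apply: idealMr.
Qed.

Lemma idpow_expr X x m : X x -> idpow X m (x ^+ m).
Proof. by move=> hx; elim: m => [|m IH] //=; rewrite exprS; apply: idmul_mul. Qed.

Lemma prime_expr X x m : is_prime X -> X (x ^+ m) -> X x.
Proof.
case=> _ h1 hp; elim: m => [|m IH]; first by rewrite expr0 => /h1.
by rewrite exprS => /hp [|/IH].
Qed.

Lemma prime_mul_notin X x y : is_prime X -> ~ X x -> ~ X y -> ~ X (x * y).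
Proof. by case=> _ _ hp nx ny /hp []. Qed.

End IdealArithmetic.

Section SumsRadicalsPrimary.
Variable R : comNzRingType.
Implicit Types (Q X Y Z : R -> Prop) (x y : R).

Definition idadd Y Z := gen (fun x => Y x \/ Z x).

Lemma idadd_least Y Z X : is_ideal X -> subid Y X -> subid Z X -> subid (idadd Y Z) X.
Proof. by move=> hX hY hZ; apply: gen_least => // x [/hY|/hZ]. Qed.
Lemma idaddl Y Z : subid Y (idadd Y Z). Proof. by move=> x hx; apply: sub_gen; left. Qed.
Lemma idaddr Y Z : subid Z (idadd Y Z). Proof. by move=> x hx; apply: sub_gen; right. Qed.

Lemma idadd_mul Y Z X w : is_ideal X ->
  (forall y, Y y -> X (w * y)) -> (forall z, Z z -> X (w * z)) ->
  subid (idadd Y Z) (fun u => X (w * u)).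
Proof. by move=> hX hY hZ; apply: idadd_least => //; apply: ideal_mull_preim. Qed.

Lemma idpow_idadd Y Z a b : is_ideal Y -> is_ideal Z ->
  subid (idpow (idadd Y Z) (a + b)) (idadd (idpow Y a) (idpow Z b)).
Proof.
move=> hY hZ; move hn: (a + b)%N => n; elim: n a b hn => [|n IH] [|a] [|b] // hn;
  try by [move=> x _; apply: idaddl | move=> x _; apply: idaddr].
apply: idmul_least; first exact: gen_ideal.
move=> u w hu hw.
have hw1 := IH a b.+1 ltac:(by case: hn) w hw.
have hw2 := IH a.+1 b ltac:(by rewrite addnS in hn; case: hn) w hw.
have hS : is_ideal (idadd (idpow Y a.+1) (idpow Z b.+1)) by exact: gen_ideal.
rewrite mulrC; apply: (idadd_mul hS _ _ hu) => [y hy|z hz]; rewrite mulrC.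
- apply: (idadd_mul hS _ _ hw1) => v hv; first exact: idaddl (idmul_mul hy hv).
  exact: idaddr (idealMl _ (idpow_ideal _ _) hv).
- apply: (idadd_mul hS _ _ hw2) => v hv; last exact: idaddr (idmul_mul hz hv).
  exact: idaddl (idealMl _ (idpow_ideal _ _) hv).
Qed.

Lemma idpow_gen1 (g : R) m :
  subid (idpow (gen (fun x => x = g)) m) (gen (fun x => x = g ^+ m)).
Proof.
elim: m => [|m IH] x hx; first exact: ideal_full (gen_ideal _) (sub_gen (esym (expr0 g))).
move: hx; apply: idmul_least; first exact: gen_ideal.
move=> u w hu /IH hw; move: u hu; apply: gen_least; first exact/ideal_mulr_preim/gen_ideal.
move=> u ->; move: w hw; apply: gen_least; first exact/ideal_mull_preim/gen_ideal.
by move=> w ->; apply: sub_gen; rewrite exprS.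
Qed.

Definition radical Q : R -> Prop := fun x => exists m, Q (x ^+ m).

Lemma radical_ideal Q : is_ideal Q -> is_ideal (radical Q).
Proof.
move=> hQ; split; first by exists 1%N; rewrite expr1; apply: ideal0.
- move=> x y [m hm] [m' hm']; exists (m + m')%N; rewrite exprDn.
  apply: ideal_sum => // i _; rewrite -mulr_natl; apply: idealMl => //.
  case: (leqP m' i) => hi; first by rewrite -(subnK hi) exprD mulrA; apply: idealMl.
  have hm'' : (m <= m + m' - i)%N by rewrite -addnBA ?leq_addr // ltnW.
  by rewrite -(subnK hm'') exprD mulrAC; apply: idealMl.
- by move=> r x [m hm]; exists m; rewrite exprMn; apply: idealMl.
Qed.

Lemma gen_radical_idpow Q (gs : seq R) : is_ideal Q ->
  (forall g, g \in gs -> radical Q g) ->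
  exists e, subid (idpow (gen (fun x => x \in gs)) e) Q.
Proof.
move=> hQ; elim: gs => [|g gs IH] hgs.
  by exists 1%N => x /(idpow_sub (gen_ideal _) (leqnn 1)); apply: gen_least.
have [e he] := IH (fun h hh => hgs h (mem_behead (s := g :: gs) hh)).
have [m hm] := hgs g (mem_head _ _).
have hsplit : subid (gen (fun x => x \in g :: gs))
    (idadd (gen (fun x => x = g)) (gen (fun x => x \in gs))).
  apply: gen_least; first exact: gen_ideal.
  by move=> y; rewrite inE => /orP [/eqP ->|hy]; [apply: idaddl|apply: idaddr]; apply: sub_gen.
exists (m + e)%N => x /(idpow_subid hsplit) /idpow_idadd.
move/(_ (gen_ideal _) (gen_ideal _)); apply: idadd_least => // y /idpow_gen1.
by apply: gen_least => // z ->.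
Qed.

Definition primary Q :=
  [/\ is_ideal Q, ~ Q 1 & forall x y, Q (x * y) -> Q x \/ radical Q y].

Lemma primary_radical_prime Q : primary Q -> is_prime (radical Q).
Proof.
case=> hQ h1 hp; split; first exact: radical_ideal.
- by case=> m; rewrite expr1n.
- move=> x y [m]; rewrite exprMn => /hp [hx|[m' hy]]; first by left; exists m.
  by right; exists (m * m')%N; rewrite exprM.
Qed.

Lemma primary_mul_notin Q x g : primary Q -> ~ Q g -> Q (x * g) -> radical Q x.
Proof. by case=> _ _ hp hg; rewrite mulrC => /hp []. Qed.

End SumsRadicalsPrimary.

Section Decomposition.
Variable R : comNzRingType.
Implicit Types (M Q : R -> Prop) (Qs : seq (R -> Prop)) (x : R).

Definition ideal_meet Qs x := forall Q, List.In Q Qs -> Q x.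

Definition decomposable (T : (R -> Prop) -> Prop) M := exists Qs,
  (forall Q, List.In Q Qs -> T Q) /\ forall x, M x <-> ideal_meet Qs x.

Definition irredundant Qs := forall s1 Q s2, Qs = s1 ++ Q :: s2 ->
  exists x, ~ Q x /\ ideal_meet (s1 ++ s2) x.

Lemma ideal_meet_cat s1 s2 x :
  ideal_meet (s1 ++ s2) x <-> ideal_meet s1 x /\ ideal_meet s2 x.
Proof.
rewrite /ideal_meet; setoid_rewrite List.in_app_iff; split; last by case=> h1 h2 Q [/h1|/h2].
by move=> h; split=> Q hQ; apply: h; tauto.
Qed.

Lemma ideal_meet_split s1 Q s2 x :
  ideal_meet (s1 ++ Q :: s2) x <-> Q x /\ ideal_meet (s1 ++ s2) x.
Proof.
rewrite !ideal_meet_cat /ideal_meet /=; split; last by case=> hQ [h1 h2]; split=> // Q' [<-|/h2].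
by case=> h1 h2; split; [apply: h2; left|split=> // Q' hQ'; apply: h2; right].
Qed.

Lemma irredundant_subdecomposition (T : (R -> Prop) -> Prop) Qs :
  (forall Q, List.In Q Qs -> T Q) -> exists Qs',
  [/\ forall Q, List.In Q Qs' -> T Q, forall x, ideal_meet Qs x <-> ideal_meet Qs' x
    & irredundant Qs'].
Proof.
move: {2}(size Qs) (leqnn (size Qs)) => n; elim: n Qs => [|n IH] Qs hs hT.
  by case: Qs hs hT => // _ _; exists [::]; split => // -[].
case: (classic (exists s1 Q s2, Qs = s1 ++ Q :: s2 /\
    forall x, ideal_meet (s1 ++ s2) x -> Q x)) => [[s1 [Q [s2 [eQs hred]]]]|hno].
  have hs' : (size (s1 ++ s2) <= n)%N by move: hs; rewrite eQs !size_cat /= addnS.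
  have hT' Q' : List.In Q' (s1 ++ s2) -> T Q'.
    by move=> hQ'; apply: hT; rewrite eQs !List.in_app_iff /= in hQ' *; tauto.
  have [Qs' [hT'' heq hirr]] := IH _ hs' hT'.
  exists Qs'; split => // x; rewrite -heq eQs ideal_meet_split.
  by split=> [[]|h] //; split=> //; apply: hred.
exists Qs; split => // s1 Q s2 eQs; apply: NNPP => hn; apply: hno.
exists s1, Q, s2; split => // x hx; apply: NNPP => hQx; apply: hn; by exists x.
Qed.

End Decomposition.

Definition noetherian (R : comNzRingType) := forall X : R -> Prop, is_ideal X ->
  exists gs : seq R, (forall g, g \in gs -> X g) /\ subid X (gen (fun g => g \in gs)).

Section Noetherian.
Variable R : comNzRingType.
Hypothesis noethR : noetherian R.
Implicit Types (M Q X Y A B : R -> Prop) (Qs : seq (R -> Prop)) (x y : R).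

Lemma noetherian_acc (C : nat -> R -> Prop) :
  (forall i, is_ideal (C i)) -> (forall i, subid (C i) (C i.+1)) ->
  exists N, forall m, subid (C m) (C N).
Proof.
move=> hC hS.
have mono : {homo C : i j / (i <= j)%N >-> subid i j}.
  by apply: homo_leq => [Y f //|Y X Z h1 h2 f /h1 /h2 //|]; apply: hS.
pose U x := exists i, C i x.
have hU : is_ideal U.
  split; first by exists 0%N; apply: ideal0.
  - move=> x y [i hx] [j hy]; exists (maxn i j).
    apply: idealD => //; first exact: (mono i) (leq_maxl i j) _ hx.
    exact: (mono j) (leq_maxr i j) _ hy.
  - by move=> r x [i hx]; exists i; apply: idealMl.
have [gs [hgs hUgs]] := noethR hU.
have [N hN] : exists N, forall g, g \in gs -> C N g.
  elim: gs {hUgs} hgs => [|g gs IH] hgs; first by exists 0%N.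
  have [N hN] := IH (fun h hh => hgs h (mem_behead (s := g :: gs) hh)).
  have [i hi] := hgs g (mem_head _ _).
  exists (maxn N i) => h; rewrite inE => /orP [/eqP ->|hh].
    exact: (mono i) (leq_maxr N i) _ hi.
  exact: (mono N) (leq_maxl N i) _ (hN h hh).
by exists N => m x hx; apply: (gen_least (hC N) hN); apply: hUgs; exists m.
Qed.

Lemma noetherian_maximal (F : (R -> Prop) -> Prop) X0 : is_ideal X0 -> F X0 ->
  exists X, [/\ is_ideal X, F X & forall Y, is_ideal Y -> F Y -> subid X Y -> subid Y X].
Proof.
move=> hX0 hFX0; apply: NNPP => hno.
have step X : exists Y, is_ideal X /\ F X ->
    [/\ is_ideal Y /\ F Y, subid X Y & ~ subid Y X].
  case: (classic (is_ideal X /\ F X)) => [[hX hFX]|]; last by exists X.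
  apply: NNPP => hY; apply: hno; exists X; split => // Y hYi hFY hXY.
  by apply: NNPP => nYX; apply: hY; exists Y.
have [nxt hnxt] := ClassicalEpsilon.choice _ step.
pose C := fix C i := if i is i'.+1 then nxt (C i') else X0.
have inv i : is_ideal (C i) /\ F (C i).
  by elim: i => [|i IH] //; case: (hnxt (C i) IH).
have [N hN] := noetherian_acc (fun i => proj1 (inv i))
  (fun i => let: And3 _ h _ := hnxt _ (inv i) in h).
by case: (hnxt _ (inv N)) => _ _; apply; apply: hN N.+1.
Qed.

Definition irreducible_ideal Q := [/\ is_ideal Q, ~ Q 1 &
  forall A B, is_ideal A -> is_ideal B -> subid Q A -> subid Q B ->
    (forall x, A x -> B x -> Q x) -> subid A Q \/ subid B Q].

Lemma irreducible_decomposition M : is_ideal M -> decomposable irreducible_ideal M.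
Proof.
move=> hM; apply: NNPP => hnd.
have [X [hX hFX hmax]] :=
  noetherian_maximal (F := fun X => ~ decomposable irreducible_ideal X) hM hnd.
have decY Y : is_ideal Y -> subid X Y -> ~ subid Y X -> decomposable irreducible_ideal Y.
  by move=> hY hXY nYX; apply: NNPP => hd; apply: nYX; apply: hmax.
case: (classic (X 1)) => h1.
  by apply: hFX; exists [::]; split => // x; split=> [_ Q []|_]; exact: ideal_full hX h1.
case: (classic (irreducible_ideal X)) => hirr.
  apply: hFX; exists [:: X]; split; first by move=> Q [<-|].
  by move=> x; split=> [hx Q [<-|]|h] //; apply: (h X); left.
have [A [B [[hA hB [hXA hXB hAB]] [nA nB]]]] : exists A B,
    [/\ is_ideal A, is_ideal B & [/\ subid X A, subid X B & forall x, A x -> B x -> X x]]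
    /\ ~ subid A X /\ ~ subid B X.
  apply: NNPP => hn; apply: hirr; split => // A B hA hB hXA hXB hAB.
  apply: NNPP => hn2; apply: hn; exists A, B; do 2!split => //; tauto.
have [QA [hQA eA]] := decY A hA hXA nA.
have [QB [hQB eB]] := decY B hB hXB nB.
apply: hFX; exists (QA ++ QB); split.
  by move=> Q /List.in_app_iff [/hQA|/hQB].
move=> x; rewrite ideal_meet_cat -eA -eB; split; last by case; apply: hAB.
by move=> hx; split; [apply: hXA|apply: hXB].
Qed.

Lemma idadd1P Q u w : is_ideal Q -> idadd Q (fun z => z = u) w ->
  exists q r, Q q /\ w = q + r * u.
Proof.
move=> hQ; apply: (@gen_least _ _ (fun w => exists q r, Q q /\ w = q + r * u)).
- split; first by exists 0, 0; rewrite mul0r addr0; split => //; apply: ideal0.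
  + move=> x y [q [r [hq ->]]] [q' [r' [hq' ->]]]; exists (q + q'), (r + r').
    by split; [apply: idealD|rewrite mulrDl addrACA].
  + move=> c x [q [r [hq ->]]]; exists (c * q), (c * r).
    by split; [apply: idealMl|rewrite mulrDr mulrA].
- move=> z [hz|->]; first by exists z, 0; rewrite mul0r addr0.
  by exists 0, 1; rewrite mul1r add0r; split => //; apply: ideal0.
Qed.

(* The colon ideals Q : y^t stabilise at some t = N; then Q is the intersection of
   Q + (y^N) and Q + (x), so irreducibility and x \notin Q force y^N \in Q. *)
Lemma irreducible_primary Q : irreducible_ideal Q -> primary Q.
Proof.
case=> hQ h1 hirr; split => // x y hxy.
case: (classic (Q x)) => hx; [by left|right].
pose C t u := Q (u * y ^+ t).
have hinc t : subid (C t) (C t.+1) by move=> u hu; rewrite /C exprS mulrCA; apply: idealMl.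
have [N hN] := noetherian_acc (fun t => ideal_mulr_preim _ hQ) hinc.
have hmeet w : idadd Q (fun z => z = y ^+ N) w -> idadd Q (fun z => z = x) w -> Q w.
  move=> /(idadd1P hQ) [q [r [hq ->]]] /(idadd1P hQ) [q' [r' [hq' hw]]].
  have hwy : Q ((q + r * y ^+ N) * y).
    by rewrite hw mulrDl -mulrA; apply: idealD; [|apply: idealMr|apply: idealMl].
  have : Q (r * y ^+ N.+1).
    have -> : r * y ^+ N.+1 = (q + r * y ^+ N) * y - q * y.
      by rewrite mulrDl addrC addKr exprSr mulrA.
    by apply: idealB => //; apply: idealMr.
  by move=> /(hN N.+1) hr; apply: idealD.
have [h|h] := hirr _ _ (gen_ideal _) (gen_ideal _) (@idaddl _ _ _) (@idaddl _ _ _) hmeet.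
- by exists N; apply: h; apply: idaddr.
- by case: hx; apply: h; apply: idaddr.
Qed.

Lemma primary_decomposition M : is_ideal M -> decomposable (@primary R) M.
Proof.
case/irreducible_decomposition => Qs [hirr hM].
by exists Qs; split => // Q /hirr; apply: irreducible_primary.
Qed.

Lemma radical_idpow_sub Q : is_ideal Q -> exists e, subid (idpow (radical Q) e) Q.
Proof.
move=> hQ; have [gs [hgs hsub]] := noethR (radical_ideal hQ).
have [e he] := gen_radical_idpow hQ hgs.
by exists e => x /(idpow_subid hsub); apply: he.
Qed.

End Noetherian.

Lemma exists_transition (A : nat -> Prop) e : ~ A 0%N -> A e -> exists i, ~ A i /\ A i.+1.
Proof.
move=> h0; elim: e => [//|e IH] he.
by case: (classic (A e)) => hAe; [exact: IH|exists e].
Qed.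

Section Primes.
Variable R : comNzRingType.
Implicit Types (M P Q X E : R -> Prop) (Xs Qs : seq (R -> Prop)) (x y : R).

Lemma prime_avoidance P Xs : is_prime P -> (forall X, List.In X Xs -> is_ideal X) ->
  exists z, ~ P z /\ forall X, List.In X Xs -> ~ subid X P -> X z.
Proof.
move=> hP; elim: Xs => [|X Xs IH] hXs; first by exists 1; case: hP.
have [z [nz hz]] := IH (fun X' h => hXs X' (or_intror h)).
have hX := hXs X (or_introl erefl).
case: (classic (subid X P)) => hXP.
  by exists z; split=> // X' [<-|/hz] //.
have [w [hw nw]] : exists w, X w /\ ~ P w.
  by apply: NNPP => h; apply: hXP => w hw; apply: NNPP => nw; apply: h; exists w.
exists (w * z); split; first exact: prime_mul_notin.
move=> X' [<-|hX'] nX'P; first exact: idealMr.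
by apply: idealMl (hXs X' (or_intror hX')) _; apply: hz.
Qed.

Lemma prime_ideal P : is_prime P -> is_ideal P. Proof. by case. Qed.

Lemma prime_radical_sub P Q : is_prime P -> subid Q P -> subid (radical Q) P.
Proof. by move=> hP hQP x [m /hQP]; apply: prime_expr. Qed.

Lemma associated_prime_sup M P : is_ideal M -> associated_prime M P -> subid M P.
Proof. by move=> hM [_ [g hg]] x hx; apply/hg; apply: idealMl. Qed.

Lemma minimal_prime_between M P E : minimal_prime M P -> is_prime E ->
  subid M E -> subid E P -> minimal_prime M E.
Proof.
case=> hP hMP hmin hE hME hEP; split => // Q hQ hMQ hQE x hx.
by apply: (hmin Q hQ hMQ) => //; [move=> y /hQE /hEP|apply: hEP].
Qed.

Section PrimaryDecomposition.
Variables (M : R -> Prop) (Qs : seq (R -> Prop)).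
Hypotheses (hQs : forall Q, List.In Q Qs -> primary Q)
           (hM : forall x, M x <-> ideal_meet Qs x).

Lemma component_ideal Q : List.In Q Qs -> is_ideal Q.
Proof. by case/hQs. Qed.

Lemma associated_prime_radical E : associated_prime M E ->
  exists2 Q0, List.In Q0 Qs & forall x, radical Q0 x <-> E x.
Proof.
case=> hE [g hg].
have [Q0 [hQ0 ng hQ0E]] : exists Q0, [/\ List.In Q0 Qs, ~ Q0 g & subid (radical Q0) E].
  apply: NNPP => hno.
  have [z [nz hz]] := prime_avoidance hE component_ideal.
  apply: nz; apply/hg/hM => Q hQ.
  case: (classic (Q g)) => hQg; first exact: idealMr (component_ideal hQ) hQg.
  apply: idealMl (component_ideal hQ) _; apply: hz => // hQE.
  by apply: hno; exists Q; split=> //; apply: prime_radical_sub.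
exists Q0 => // x; split; first exact: hQ0E.
by move=> /hg /hM /(_ Q0 hQ0) hx; apply: primary_mul_notin (hQs hQ0) ng _; rewrite mulrC.
Qed.

(* In an irredundant decomposition every radical is associated: if x lies in all
   the other components but not in Q, then M : x p = rad Q for a suitable p. *)
Lemma irredundant_radical_associated : noetherian R -> irredundant Qs ->
  forall Q, List.In Q Qs -> associated_prime M (radical Q).
Proof.
move=> noethR hirr Q hQ; have [s1 [s2 eQs]] := List.in_split _ _ hQ.
have [x [nx hx]] := hirr _ _ _ eQs.
have hQi := component_ideal hQ.
split; first exact/primary_radical_prime/hQs.
have [e he] := radical_idpow_sub noethR hQi.
pose A i := forall p, idpow (radical Q) i p -> Q (x * p).
have A0 : ~ A 0%N by move=> h; apply: nx; rewrite -(mulr1 x); apply: h.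
have Ae : A e by move=> p /he hp; apply: idealMl.
have [i [nAi Ai1]] := exists_transition A0 Ae.
have [p [hp nxp]] : exists p, idpow (radical Q) i p /\ ~ Q (x * p).
  apply: NNPP => h; apply: nAi => p hp; apply: NNPP => hq; apply: h; by exists p.
exists (x * p) => g; split.
- move=> hg; apply/hM; rewrite eQs; apply/ideal_meet_split; split.
    by rewrite -mulrA; apply: Ai1; rewrite mulrC; apply: idmul_mul.
  by move=> Q' hQ'; rewrite -mulrA; apply: idealMr (component_ideal _) (hx _ hQ');
    rewrite eQs; apply/List.in_app_iff; move/List.in_app_iff: hQ' => /=; tauto.
- move=> /hM /(_ Q hQ); rewrite mulrC; exact: primary_mul_notin (hQs hQ) nxp.
Qed.

End PrimaryDecomposition.
End Primes.

Section Saturation.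
Variable R : comNzRingType.
Hypothesis noethR : noetherian R.
Implicit Types (M P Q E : R -> Prop) (Qs : seq (R -> Prop)) (f x : R).

Definition emb_int M f := forall P, associated_prime M P -> ~ minimal_prime M P -> P f.

Definition emb_saturation M f := exists2 t, (1 <= t)%N & colon M (idpow (emb_int M) t) f.

Lemma symbolic_powerE (I : R -> Prop) m : symbolic_power I m = emb_saturation (idpow I m).
Proof. by []. Qed.

Definition min_saturation M f := forall P, minimal_prime M P -> exists2 s, ~ P s & M (s * f).

Lemma min_saturation_ideal M : is_ideal M -> is_ideal (min_saturation M).
Proof.
move=> hM; split.
- by move=> P [[_ h1 _] _ _]; exists 1 => //; rewrite mulr0; apply: ideal0.
- move=> x y hx hy P hP; have [s ns hs] := hx P hP; have [s' ns' hs'] := hy P hP.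
  exists (s * s'); first by apply: prime_mul_notin => //; case: hP.
  rewrite mulrDr; apply: idealD => //.
    by rewrite mulrAC; apply: idealMr.
  by rewrite -mulrA; apply: idealMl.
- move=> r x hx P hP; have [s ns hs] := hx P hP.
  by exists s => //; rewrite mulrCA; apply: idealMl.
Qed.

(* Prime avoidance gives z outside P in the radical of every primary component whose
   radical is not inside P.  Each embedded associated prime is such a radical, since a
   radical inside the minimal prime P would itself be minimal. *)
Lemma emb_saturation_sub M : is_ideal M -> subid (emb_saturation M) (min_saturation M).
Proof.
move=> hM f [t ht hf] P hP.
have [Qs [hQs hMQ]] := primary_decomposition noethR hM.
have hPp : is_prime P by case: hP.
have hrad Q : List.In Q [seq radical Q | Q <- Qs] -> is_ideal Q.
  by case/List.in_map_iff=> Q' [<- hQ']; apply/radical_ideal/(component_ideal hQs).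
have [z [nz hz]] := prime_avoidance hPp hrad.
have zL : emb_int M z.
  move=> E hE nmin; have [Q0 hQ0 eQ0] := associated_prime_radical hQs hMQ hE.
  case: (classic (subid (radical Q0) P)) => hQ0P.
    case: nmin; apply: (minimal_prime_between hP hE.1).
      exact: associated_prime_sup.
    by move=> y /eQ0; apply: hQ0P.
  by apply/eQ0; apply: hz => //; apply: List.in_map.
exists (z ^+ t); first by move/(prime_expr hPp).
by rewrite mulrC; apply: hf; apply: idpow_expr.
Qed.

Lemma exists_common_bound (T : Type) (s : seq T) (B : T -> nat -> Prop) :
  (forall a e e', (e <= e')%N -> B a e -> B a e') ->
  (forall a, List.In a s -> exists e, B a e) -> exists t, forall a, List.In a s -> B a t.
Proof.
move=> hmono; elim: s => [|a s IH] h; first by exists 0%N.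
have [t ht] := IH (fun b hb => h b (or_intror hb)).
have [e he] := h a (or_introl erefl).
exists (maxn t e) => b [<-|hb]; first exact: hmono (leq_maxr t e) he.
exact: hmono (leq_maxl t e) (ht b hb).
Qed.

(* With an irredundant primary decomposition, emb_int M lies in the radical of every
   component Q not containing f, since such a radical is associated but not minimal. *)
Lemma min_saturation_sub M : is_ideal M -> subid (min_saturation M) (emb_saturation M).
Proof.
move=> hM f hf.
have [Qs0 [hQs0 hMQ0]] := primary_decomposition noethR hM.
have [Qs [hQs hQQ hirr]] := irredundant_subdecomposition hQs0.
have hMQ x : M x <-> ideal_meet Qs x by rewrite hMQ0.
have hbound Q : List.In Q Qs -> exists e, forall g, idpow (emb_int M) e g -> Q (f * g).
  move=> hQ; have hQi := component_ideal hQs hQ.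
  case: (classic (Q f)) => hQf; first by exists 0%N => g _; apply: idealMr.
  have hass := irredundant_radical_associated hQs hMQ noethR hirr hQ.
  have hnm : ~ minimal_prime M (radical Q).
    move=> hmin; have [s ns hs] := hf _ hmin; apply: ns.
    by apply: primary_mul_notin (hQs _ hQ) hQf _; move/hMQ: hs; apply.
  have [e he] := radical_idpow_sub noethR hQi.
  exists e => g hg; apply: idealMl => //; apply: he; move: g hg; apply: idpow_subid.
  by move=> y /(_ _ hass hnm).
have [t ht] :=
  exists_common_bound (B := fun Q e => forall g, idpow (emb_int M) e g -> Q (f * g))
    (fun Q e e' hee' h g hg => h g (idpow_leq hee' hg)) hbound.
by exists t.+1 => // g hg; apply/hMQ => Q hQ; apply: ht => //; apply: idpowSr.
Qed.

End Saturation.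

Lemma exists_argmin_from (u : nat -> nat) p :
  exists j, (p <= j)%N /\ forall j', (p <= j')%N -> (u j <= u j')%N.
Proof.
suff hv v : forall j0, (p <= j0)%N -> (u j0 <= v)%N ->
    exists j, (p <= j)%N /\ forall j', (p <= j')%N -> (u j <= u j')%N.
  exact: hv (u p) p (leqnn p) (leqnn _).
elim: v => [|v IH] j0 hj0 hv.
  by exists j0; split => // j' _; move: hv; rewrite leqn0 => /eqP ->.
case: (classic (exists2 j1, (p <= j1)%N & (u j1 <= v)%N)) => [[j1 h1 h2]|hno].
  exact: IH h1 h2.
exists j0; split => // j' hj'; apply: leq_trans hv _.
by rewrite ltnNge; apply/negP => h; apply: hno; exists j'.
Qed.

Lemma nondecreasing_subsequence (u : nat -> nat) : exists2 psi : nat -> nat,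
  (forall k, (psi k < psi k.+1)%N) & {homo u \o psi : a b / (a <= b)%N}.
Proof.
have [am ham] := ClassicalEpsilon.choice _ (exists_argmin_from u).
pose psi := fix psi k := if k is k'.+1 then am (psi k').+1 else am 0%N.
have hinc k : (psi k < psi k.+1)%N by case: (ham (psi k).+1).
exists psi => //; apply: homo_leq => [//|??? /leq_trans h /h //|k] /=.
case: k => [|k]; first by case: (ham 0%N) => _; apply.
by case: (ham (psi k).+1) => _; apply; apply: leq_trans (hinc k) (ltnW (hinc k.+1)).
Qed.

Section Hilbert.
Variables (K : fieldType) (n : nat).
Local Notation S := {mpoly K[n]}.

Lemma dickson_seq (s : nat -> 'X_{1..n}) (l : seq 'I_n) : exists2 phi : nat -> nat,
  (forall k, (phi k < phi k.+1)%N) &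
  forall a b, (a <= b)%N -> forall i, i \in l -> (s (phi a) i <= s (phi b) i)%N.
Proof.
elim: l => [|i0 l [phi hphi hl]]; first by exists id.
have [psi hpsi hu] := nondecreasing_subsequence (fun k => s (phi k) i0).
exists (phi \o psi) => [k|a b hab i]; first exact: (homo_ltn ltn_trans hphi).
rewrite inE => /orP [/eqP ->|hi]; first exact: hu.
by apply: hl => //; apply: (homo_leq leqnn leq_trans (fun k => ltnW (hpsi k))).
Qed.

Lemma dickson (s : nat -> 'X_{1..n}) : exists i j, (i < j)%N /\ (s i <= s j)%MM.
Proof.
have [phi hphi hl] := dickson_seq s (enum 'I_n).
exists (phi 0%N), (phi 1%N); split; first exact: hphi.
by apply/mnm_lepP => i; apply: hl => //; rewrite mem_enum.
Qed.

Lemma exists_mlead_min (P : S -> Prop) f0 : P f0 ->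
  exists f, P f /\ forall g, P g -> (mlead f <= mlead g)%O.
Proof.
move: {2}(mlead f0) (erefl (mlead f0)) => m.
elim/(well_founded_ind (@ltom_wf n)): m f0 => m IH f0 hm hf0.
case: (classic (exists g, P g /\ (mlead g < m)%O)) => [[g [hg hlt]]|hno].
  exact: IH _ hlt g erefl hg.
exists f0; split => // g hg; rewrite hm leNgt; apply/negP => hlt.
by apply: hno; exists g.
Qed.

Lemma mlead_reduction (f g : S) : f != 0 -> g != 0 -> (mlead f <= mlead g)%MM ->
  exists r : S, g - r * f = 0 \/ (mlead (g - r * f) < mlead g)%O.
Proof.
move=> nzf nzg hfg.
have nzcf : mleadc f != 0 by rewrite mleadc_eq0.
pose c := mleadc g / mleadc f; pose r : S := c *: 'X_[mlead g - mlead f].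
have nzc : c != 0 by rewrite mulf_neq0 ?invr_eq0 ?mleadc_eq0.
have lead_r : mlead r = (mlead g - mlead f)%MM by rewrite mleadZ // mleadXm.
have leadc_r : mleadc r = c by rewrite lead_r mcoeffZ mcoeffX eqxx mulr1.
have nzr : r != 0 by rewrite -mleadc_eq0 leadc_r.
have lead_rf : mlead (r * f) = mlead g by rewrite mleadM // lead_r submK.
have leadc_rf : mleadc (r * f) = mleadc g.
  by rewrite mleadcM_proper leadc_r ?divfK // mleadc_eq0.
exists r; have := mleadB_le g (r * f); rewrite lead_rf joinxx le_eqVlt.
case/orP=> [/eqP lead_grf|]; [left|by right].
by apply/eqP; rewrite -mleadc_eq0 lead_grf mcoeffB -{2}lead_rf leadc_rf subrr.
Qed.

(* If X were not finitely generated, choosing successively elements of X outside the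
   ideal generated so far with minimal leading monomial would give, by Dickson's lemma,
   two of them whose leading monomials divide each other; reducing the later by the
   earlier contradicts the minimality of its leading monomial. *)
Theorem hilbert_basis : noetherian S.
Proof.
move=> X hX; apply: NNPP => hno.
have step (gs : seq S) : exists f, (forall g, g \in gs -> X g) ->
    [/\ X f, ~ gen (fun h => h \in gs) f &
        forall g, X g -> ~ gen (fun h => h \in gs) g -> (mlead f <= mlead g)%O].
  case: (classic (forall g, g \in gs -> X g)) => hgs; last by exists 0.
  have [f0 [hf0 nf0]] : exists f, X f /\ ~ gen (fun g => g \in gs) f.
    apply: NNPP => h; apply: hno; exists gs; split => // f hf.
    by apply: NNPP => nf; apply: h; exists f.
  have [f [[hf nf] hmin]] :=
    exists_mlead_min (P := fun f => X f /\ ~ gen (fun g => g \in gs) f) (conj hf0 nf0).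
  by exists f => _; split => // g hg ng; apply: hmin.
have [nxt hnxt] := ClassicalEpsilon.choice _ step.
pose L := fix L k := if k is k'.+1 then rcons (L k') (nxt (L k')) else [::].
pose F k := nxt (L k).
have hL k g : g \in L k -> X g.
  elim: k g => [//|k IH] g /=; rewrite mem_rcons inE => /orP [/eqP ->|/IH //].
  by case: (hnxt (L k) IH).
have hFL i j : (i < j)%N -> F i \in L j.
  move=> hij; rewrite -(subnK hij); elim: (j - i.+1)%N => [|d IH] /=.
    by rewrite mem_rcons mem_head.
  by rewrite mem_rcons inE IH orbT.
have [i [j [hij hdiv]]] := dickson (fun k => mlead (F k)).
have [hXj nj hminj] := hnxt (L j) (hL j).
have [hXi _ _] := hnxt (L i) (hL i).
have gen0 k : gen (fun h => h \in L k) 0 by exact: ideal0 (gen_ideal _).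
have nz k : F k != 0.
  by apply/eqP => h; case: (hnxt (L k) (hL k)) => _ + _; rewrite -/(F k) h.
have [r hr] := mlead_reduction (nz i) (nz j) hdiv.
have hXr : X (F j - r * F i) by apply: idealB => //; apply: idealMl.
have nr : ~ gen (fun h => h \in L j) (F j - r * F i).
  move=> hg; apply: nj; rewrite -/(F j) -(subrK (r * F i) (F j)).
  apply: idealD (gen_ideal _) hg _.
  by apply: idealMl (gen_ideal _) _; apply: sub_gen; apply: hFL.
case: hr => [h0|]; first by apply: nr; rewrite h0.
by rewrite ltNge (hminj _ hXr nr).
Qed.

End Hilbert.

Section PowersAndPrimes.
Variable R : comNzRingType.
Implicit Types (I P : R -> Prop).

Lemma idpow_sub_prime I P m : is_ideal I -> is_prime P -> (1 <= m)%N ->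
  subid (idpow I m) P <-> subid I P.
Proof.
move=> hI hP hm; split; last by move=> h x /(idpow_sub hI hm) /h.
by move=> h x hx; apply: (prime_expr (m := m) hP); apply/h/idpow_expr.
Qed.

Lemma minimal_prime_idpow I m m' P : is_ideal I -> (1 <= m)%N -> (1 <= m')%N ->
  minimal_prime (idpow I m) P -> minimal_prime (idpow I m') P.
Proof.
move=> hI hm hm' [hP hsub hmin]; split => //.
  by apply/(idpow_sub_prime hI hP hm'); apply/(idpow_sub_prime hI hP hm).
move=> Q hQ hsQ; apply: hmin => //.
by apply/(idpow_sub_prime hI hQ hm); apply/(idpow_sub_prime hI hQ hm').
Qed.

End PowersAndPrimes.

Section Derivatives.
Variables (R : comNzRingType) (n : nat).
Implicit Types (X I : {mpoly R[n]} -> Prop).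

Lemma mderiv_idpow X i m f : is_ideal X -> idpow X m.+1 f -> idpow X m (mderiv i f).
Proof.
move=> hX; elim: m f => [//|m IH] f.
pose D g := idpow X m.+2 g /\ idpow X m.+1 (mderiv i g).
suff: subid (idpow X m.+2) D by move=> hD /hD [].
have hX2 := idpow_ideal X m.+2; have hX1 := idpow_ideal X m.+1.
apply: gen_least.
- split; first by split; [apply: ideal0 hX2|rewrite mderiv0; apply: ideal0 hX1].
  + move=> g h [hg hg'] [hh hh']; split; first exact: idealD hX2 hg hh.
    by rewrite mderivD; exact: idealD hX1 hg' hh'.
  + move=> r g [hg hg']; split; first exact: idealMl hX2 hg.
    rewrite mderivM; apply: idealD hX1 (idealMl _ hX1 (idpowSr hg)) (idealMl _ hX1 hg').
- move=> h [x [g [hx hg ->]]]; split; first exact: idmul_mul.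
  by rewrite mderivM; apply: idealD hX1 (idealMl _ hX1 hg) (idmul_mul hx (IH _ hg)).
Qed.

Lemma min_saturation_mderiv I m i f : is_ideal I -> (1 <= m)%N ->
  min_saturation (idpow I m.+1) f -> min_saturation (idpow I m) (mderiv i f).
Proof.
move=> hI hm hf P hP.
have [s ns hs] := hf P (minimal_prime_idpow hI hm (leqW hm) hP).
have hPp : is_prime P by case: hP.
have hXm := idpow_ideal I m.
exists (s * s); first exact: prime_mul_notin.
have -> : s * s * mderiv i f = s * mderiv i (s * f) - (s * f) * mderiv i s.
  by rewrite mderivM mulrDr; ring.
exact: idealB hXm (idealMl _ hXm (mderiv_idpow _ hI hs)) (idealMr _ hXm (idpowSr hs)).
Qed.

End Derivatives.

Theorem theorem2p5 (K : fieldType) (hK : [pchar K]%R =i pred0) (n : nat)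
  (a : 'I_n -> nat) (ha : forall i, (0 < a i)%N)
  (I : {mpoly K[n]} -> Prop) (hI : homog_ideal a I) (k : nat) (hk : (2 <= k)%N)
  (hsq : subid (idpow (symbolic_power I k.-1) 2) (idpow I k)) :
  forall J : {mpoly K[n]} -> Prop, homog_ideal a J ->
    subid (idpow I k) J -> subid J (symbolic_power I k) ->
    strongly_golod J.
Proof.
move=> J _ hIJ; rewrite !symbolic_powerE in hsq * => hJs.
have hIi : is_ideal I by case: hI.
have noeth : noetherian {mpoly K[n]} := @hilbert_basis K n.
have hk1 : (1 <= k.-1)%N by rewrite -ltnS prednK // ltnW.
have hder : subid (deriv_ideal J) (min_saturation (idpow I k.-1)).
  apply: gen_least; first exact/min_saturation_ideal/idpow_ideal.
  move=> _ [f [i [hf ->]]]; apply: min_saturation_mderiv => //.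
  rewrite prednK ?(ltnW hk) //.
  by move/hJs: hf => /(emb_saturation_sub noeth (idpow_ideal I k)).
move=> x hx; apply/hIJ/hsq; move: x hx; apply: idpow_subid => y /hder.
by move/(min_saturation_sub noeth (idpow_ideal I k.-1)).
Qed.
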